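(* Assume $\mathbb{E}\min(Z,W)=\infty$. Then, with probability one, $\liminf_{n\to\infty}\Lambda_n<\infty$.
   Context: Let $Z,W,(Z_n)_{n\ge1},(W_n)_{n\ge1}$ be independent, identically distributed random variables taking values in $\mathbb{N}=\{1,2,3,\dots\}$. Define sets $T_n\subset\mathbb{Z}$ recursively by $T_n=\{n\}$ for $n\le 0$ and $T_n=\{n\}\cup T_{n-Z_n}\cup T_{n-W_n}$ for $n\ge1$. Let $\mathcal{L}_n=T_n\cap\{0,-1,-2,\dots\}$ and $\Lambda_n=|\mathcal{L}_n|$. *)

From HB Require Import structures.
From mathcomp Require Import all_boot all_order all_algebra.
From mathcomp Require Import all_classical all_reals all_analysis.
Set Implicit Arguments. Unset Strict Implicit. Unset Printing Implicit Defensive.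
Import Order.TTheory GRing.Theory Num.Theory.
Local Open Scope classical_set_scope.
Local Open Scope ring_scope.

(* The whole family (Z, W, (Z_n)_{n>=1}, (W_n)_{n>=1}) indexed by bool * nat:
   (false,0) |-> Z, (true,0) |-> W, (false,n.+1) |-> Z_{n+1}, (true,n.+1) |-> W_{n+1}.
   (Zs 0 and Ws 0 are not part of the zw_family: they are unused.) *)
Definition zw_family {T : Type} (Z W : T -> nat) (Zs Ws : nat -> T -> nat)
  (i : bool * nat) : T -> nat :=
  match i with
  | (false, 0) => Z
  | (true, 0) => W
  | (false, n.+1) => Zs n.+1
  | (true, n.+1) => Ws n.+1
  end.

Definition discrete_rvs {d} {T : measurableType d} {I : Type}
  (X : I -> T -> nat) : Prop :=
  forall i k, measurable [set w | X i w = k].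

Definition mutually_independent {d} {T : measurableType d} {R : realType}
  (P : probability T R) {I : eqType} (X : I -> T -> nat) : Prop :=
  forall (J : seq I) (k : I -> nat), uniq J ->
    P (\bigcap_(j in [set` J]) [set w | X j w = k j]) =
    (\prod_(j <- J) P [set w | X j w = k j])%E.

Definition identically_distributed {d} {T : measurableType d} {R : realType}
  (P : probability T R) {I : Type} (X : I -> T -> nat) : Prop :=
  forall i j k, P [set w | X i w = k] = P [set w | X j w = k].

(* The sets T_n (for a fixed outcome, with z n = Z_n, w n = W_n), computed as a
   sequence of integers.
   Since z, w >= 1, fuel n suffices to compute T_n exactly. *)
Fixpoint T_aux (z w : nat -> nat) (fuel : nat) (m : int) : seq int :=
  if (m <= 0)%R then [:: m] else
  match fuel with
  | 0 => [::]
  | f.+1 => m :: (T_aux z w f (m - (z `|m|%N)%:Z) ++ T_aux z w f (m - (w `|m|%N)%:Z))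
  end.

Definition Tset (z w : nat -> nat) (n : nat) : seq int := T_aux z w n n%:Z.

Definition Lambda (z w : nat -> nat) (n : nat) : nat :=
  size (undup [seq m <- Tset z w n | (m <= 0)%R]).

From HB Require Import structures.
From mathcomp Require Import all_boot all_order all_algebra.
From mathcomp Require Import all_classical all_reals all_analysis.
From mathcomp Require Import lra measurable_realfun.
Import Order.TTheory GRing.Theory Num.Theory.
Local Open Scope classical_set_scope.
Local Open Scope ring_scope.

(* On the event B_n = {Z_n > n - 1, W_n > n - 1} both jumps from n land in
   {0, -1, -2, ...}, so Lambda_n <= 2.  The events B_n are independent, and
   since the pairs (Z_n, W_n) are distributed like (Z, W), P(B_n) >= P(min(Z, W) > n),
   whose sum over n is E min(Z, W) = +oo.  By the second Borel-Cantelli lemma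
   almost surely infinitely many B_n occur, hence liminf Lambda_n <= 2. *)

Lemma set_seq_cons (I : eqType) (i : I) (s : seq I) : [set` i :: s] = i |` [set` s].
Proof.
apply/seteqP; split => j /=; rewrite inE; first by case/orP => [/eqP|]; [left|right].
by case=> [->|js]; rewrite ?eqxx ?js ?orbT.
Qed.

Definition countable_independent {d} {T : measurableType d} {R : realType}
  (P : probability T R) {I : eqType} {V : countType} (X : I -> T -> V) : Prop :=
  forall (J : seq I) (k : I -> V), uniq J ->
    P (\bigcap_(j in [set` J]) [set w | X j w = k j]) =
    (\prod_(j <- J) P [set w | X j w = k j])%E.

Lemma bigcap_seq2 (I : eqType) (U : Type) (F : I -> set U) i j :
  \bigcap_(k in [set` [:: i; j]]) F k = F i `&` F j.
Proof. by rewrite set_seq_cons set_cons1 bigcap_setU1 bigcap_set1. Qed.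

Section countable_random_variables.
Local Open Scope ereal_scope.
Context {d} {T : measurableType d} {R : realType} (P : probability T R)
  {I : eqType} {V : countType} {X : I -> T -> V}.
Hypothesis mX : forall i v, measurable [set w | X i w = v].

(* Splitting by the code [pickle v] writes the preimage of any [S] as a
   disjoint union of level sets indexed by [nat], uniformly in [i]. *)
Definition preim_code i (S : set V) (k : nat) :=
  [set w | S (X i w) /\ pickle (X i w) = k].

Lemma preim_codeE S k :
  (exists v, forall i, preim_code i S k = [set w | X i w = v]) \/
  (forall i, preim_code i S k = set0).
Proof.
have [[v [Sv pv]]|nov] := pselect (exists v, S v /\ pickle v = k).
- left; exists v => i; apply/seteqP; split => w /=.
  + by move=> [_ pw]; apply: (pcan_inj (@pickleK V)); rewrite pw pv.
  + by move=> Xv; rewrite /preim_code /= Xv.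
- by right => i; apply/seteqP; split => w //= [Sw pw]; apply: nov; exists (X i w).
Qed.

Lemma measurable_preim_code i S k : measurable (preim_code i S k).
Proof. by case: (preim_codeE S k) => [[v ->]|->]. Qed.

Lemma preim_bigcup_code i S : [set w | S (X i w)] = \bigcup_k preim_code i S k.
Proof.
apply/seteqP; split => w /=; first by move=> Sw; exists (pickle (X i w)).
by move=> [k _ []].
Qed.

Lemma measurable_preim i S : measurable [set w | S (X i w)].
Proof.
by rewrite preim_bigcup_code; apply: bigcupT_measurable => k; exact: measurable_preim_code.
Qed.

Lemma measure_preimI i S A : measurable A ->
  P ([set w | S (X i w)] `&` A) = \sum_(k <oo) P (preim_code i S k `&` A).
Proof.
move=> mA; rewrite preim_bigcup_code setI_bigcupl measure_semi_bigcup //.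
- by move=> k; apply: measurableI => //; exact: measurable_preim_code.
- by move=> k l _ _ [w [[[_ <-] _] [[_ <-] _]]].
- by rewrite -setI_bigcupl -preim_bigcup_code; apply: measurableI => //; exact: measurable_preim.
Qed.

Lemma measure_preim i S : P [set w | S (X i w)] = \sum_(k <oo) P (preim_code i S k).
Proof.
by rewrite -[X in P X]setIT measure_preimI //; apply: eq_eseriesr => k _; rewrite setIT.
Qed.

Lemma identically_distributed_preim i j S :
  (forall v, P [set w | X i w = v] = P [set w | X j w = v]) ->
  P [set w | S (X i w)] = P [set w | S (X j w)].
Proof.
move=> Pij; rewrite !measure_preim; apply: eq_eseriesr => k _.
by case: (preim_codeE S k) => [[v E]|E]; rewrite !E ?Pij.
Qed.

Hypothesis indX : countable_independent P X.

(* The level-set constraints on [M] are the induction loading: each step turns one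
   preimage into a countable sum of level sets via [preim_code]. *)
Lemma independent_preim_levels (J M : seq I) (S : I -> set V) (k : I -> V) :
  uniq (J ++ M) ->
  P (\bigcap_(j in [set` J]) [set w | S j (X j w)] `&`
     \bigcap_(m in [set` M]) [set w | X m w = k m])
  = \prod_(j <- J) P [set w | S j (X j w)] * \prod_(m <- M) P [set w | X m w = k m].
Proof.
elim: J M k => [|j J IH] M k /=.
  by move=> uM; rewrite set_nil bigcap_set0 setTI big_nil mul1e indX.
rewrite mem_cat negb_or => /andP[/andP[jJ jM] uJM].
rewrite set_seq_cons bigcap_setU1 -setIA measure_preimI; last first.
  apply: measurableI; apply: fin_bigcap_measurable => // i _; exact: measurable_preim.
pose C := \prod_(i <- J) P [set w | S i (X i w)] * \prod_(m <- M) P [set w | X m w = k m].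
have Cfin : C \is a fin_num.
  by rewrite fin_numM // prode_fin_num // => i _;
    rewrite fin_num_measure //; exact: measurable_preim.
transitivity (\sum_(l <oo) ((fine C)%:E * P (preim_code j (S j) l))); last first.
  by rewrite nneseriesZl // -measure_preim fineK // big_cons [LHS]muleC /C muleA.
apply: eq_eseriesr => l _; rewrite fineK //.
case: (preim_codeE (S j) l) => [[v ->]|->]; last by rewrite set0I measure0 mule0.
have uJjM : uniq (J ++ j :: M).
  by rewrite -cat1s uniq_catCA /= mem_cat negb_or jJ jM.
have keepM : {in M, forall m, (if m == j then v else k m) = k m}.
  by move=> m mM; rewrite ifN //; apply: contraNneq jM => <-.
have := IH (j :: M) (fun i => if i == j then v else k i) uJjM.
rewrite set_seq_cons bigcap_setU1 big_cons eqxx.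
rewrite [X in _ `&` (_ `&` X)](eq_bigcapr (G := fun m => [set w | X m w = k m])); last first.
  by move=> m mM /=; rewrite keepM.
rewrite [X in _ * (_ * X)](eq_big_seq (fun m => P [set w | X m w = k m])); last first.
  by move=> m mM; rewrite keepM.
by rewrite setICA => ->; rewrite muleCA muleC.
Qed.

Lemma independent_preim (J : seq I) (S : I -> set V) : uniq J ->
  P (\bigcap_(j in [set` J]) [set w | S j (X j w)]) =
  \prod_(j <- J) P [set w | S j (X j w)].
Proof.
move=> uJ; have /set0P[w0 _] : [set: T] != set0.
  apply/eqP => T0; have := probability_setT P.
  by rewrite T0 measure0 => /esym/eqP; rewrite onee_eq0.
have := independent_preim_levels J [::] S (X^~ w0); rewrite cats0 => /(_ uJ).
by rewrite set_nil bigcap_set0 setIT big_nil mule1.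
Qed.

End countable_random_variables.

Definition columns {T V J : Type} (X : bool * J -> T -> V) (j : J) (w : T) : V * V :=
  (X (false, j) w, X (true, j) w).

Section columns.
Context {d} {T : measurableType d} {R : realType} (P : probability T R)
  {J : eqType} {V : countType} {X : bool * J -> T -> V}.

Lemma columns_levelE j (v : V * V) : [set w | columns X j w = v] =
  \bigcap_(i in [set` [:: (false, j); (true, j)]]) [set w | X i w = if i.1 then v.2 else v.1].
Proof.
rewrite bigcap_seq2; case: v => a b.
by apply/seteqP; split => w /= => [[<- <-]|[<- <-]].
Qed.

Lemma measurable_columns : (forall i v, measurable [set w | X i w = v]) ->
  forall j v, measurable [set w | columns X j w = v].
Proof. by move=> mX j v; rewrite columns_levelE bigcap_seq2; exact: measurableI. Qed.

Hypothesis indX : countable_independent P X.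

Lemma countable_independent_columns : countable_independent P (columns X).
Proof.
move=> s k us; pose k' (i : bool * J) := if i.1 then (k i.2).2 else (k i.2).1.
pose s' := [seq (false, j) | j <- s] ++ [seq (true, j) | j <- s].
have us' : uniq s'.
  rewrite cat_uniq !map_inj_uniq // => [|j1 j2 []//|j1 j2 []//].
  by rewrite us andbT; apply/hasPn => i /mapP[j _ ->]; apply/mapP => -[? _ []].
have -> : \bigcap_(j in [set` s]) [set w | columns X j w = k j] =
          \bigcap_(i in [set` s']) [set w | X i w = k' i].
  apply/seteqP; split => w /= Hw.
    move=> i; rewrite /= /s' mem_cat => /orP[] /mapP[j js ->];
      by have := Hw j js; rewrite /columns /k' /=; case: (k j) => a b [].
  move=> j js; rewrite columns_levelE => i /=; rewrite !inE => /orP[] /eqP ->; apply: Hw;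
    by rewrite /= mem_cat map_f ?orbT.
rewrite indX // big_cat !big_map.
rewrite [RHS](eq_bigr (fun j => P [set w | X (false, j) w = k' (false, j)] *
                               P [set w | X (true, j) w = k' (true, j)]))%E.
  by rewrite big_split.
by move=> j _; rewrite columns_levelE indX //= !big_cons big_nil mule1.
Qed.

Lemma identically_distributed_columns :
  (forall i v, measurable [set w | X i w = v]) ->
  (forall i i' v, P [set w | X i w = v] = P [set w | X i' w = v]) ->
  forall j j' (S : set (V * V)),
    P [set w | S (columns X j w)] = P [set w | S (columns X j' w)].
Proof.
move=> mX idX j j' S; apply: (identically_distributed_preim P (measurable_columns mX)).
move=> v; rewrite !columns_levelE !indX //= !big_cons !big_nil.
by rewrite (idX (false, j) (false, j')) (idX (true, j) (true, j')).
Qed.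

End columns.

Lemma nneseries_ltn (R : realType) (m : nat) :
  (\sum_(n <oo) (((n < m)%N)%:R : R)%:E = (m%:R)%:E)%E.
Proof.
rewrite (nneseries_split 0 m) // add0n eseries0 ?adde0; last first.
  by move=> n mn _; rewrite ltnNge mn.
rewrite sumEFin big_nat_cond (eq_bigr (fun _ => 1)) -?big_nat_cond.
  by rewrite sumr_const_nat subn0.
by move=> n /andP[/andP[_ ->]].
Qed.

Lemma integral_nat_tail d (T : measurableType d) (R : realType) (mu : measure T R)
    (X : T -> nat) :
  (forall n, measurable [set w | (n < X w)%N]) ->
  (\int[mu]_w ((X w)%:R : R)%:E = \sum_(n <oo) mu [set w | (n < X w)%N])%E.
Proof.
move=> mX; transitivity (\int[mu]_w \sum_(n <oo) (\1_[set w | (n < X w)%N] w : R)%:E)%E.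
  apply: eq_integral => w _; rewrite -nneseries_ltn.
  by apply: eq_eseriesr => n _; rewrite indicE mem_setE.
rewrite integral_nneseries //; last first.
  by move=> n; apply/measurable_EFinP; exact: measurable_indic.
by apply: eq_eseriesr => n _; rewrite integral_indic // setIT.
Qed.

Lemma prod1B_mul_1D_sum_le1 {R : realDomainType} {I : Type} (s : seq I) (p : I -> R) :
  (forall i, 0 <= p i <= 1) ->
  \prod_(i <- s) (1 - p i) * (1 + \sum_(i <- s) p i) <= 1.
Proof.
move=> p01; elim: s => [|i s IH]; first by rewrite !big_nil addr0 mulr1.
rewrite !big_cons; move: IH (p01 i).
set Q := \prod_(_ <- _) _; set S := \sum_(_ <- _) _ => IH /andP[p0 p1].
have Q0 : 0 <= Q by apply: prodr_ge0 => j _; have /andP[_] := p01 j; rewrite subr_ge0.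
have S0 : 0 <= S by apply: sumr_ge0 => j _; have /andP[] := p01 j.
(* (1 - p)Q(1 + p + S) = Q(1 + S) - pQ(p + S), and the subtracted term is >= 0 *)
have : 0 <= p i * Q * (p i + S) by rewrite !mulr_ge0 // addr_ge0.
nra.
Qed.

Lemma nneseries_tail_unbounded (R : realType) (p : nat -> R) :
  (forall n, 0 <= p n) -> (\sum_(n <oo) (p n)%:E = +oo)%E ->
  forall N c, exists M, c <= \sum_(N <= n < M) p n.
Proof.
move=> p0 sum_oo N c; apply: contrapT => /forallNP small.
have tail_le : (\sum_(N <= n <oo) (p n)%:E <= c%:E)%E.
  apply: lime_le; first by apply: is_cvg_nneseries_cond => n _ _; rewrite lee_fin.
  by apply: nearW => M; rewrite sumEFin lee_fin ltW // ltNge; apply/negP/small.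
have head_lt : (\sum_(0 <= n < N) (p n)%:E < +oo)%E by rewrite sumEFin ltry.
have := lte_add_pinfty head_lt (le_lt_trans tail_le (ltry c)).
rewrite -(nneseries_split 0 N) => [|n _]; last by rewrite lee_fin.
by rewrite ltNge leye_eq => /negP; apply; apply/eqP; exact: sum_oo.
Qed.

Section second_borel_cantelli.
Local Open Scope ereal_scope.
Context {d} {T : measurableType d} {R : realType} {P : probability T R}
  {B : nat -> set T}.
Hypothesis mB : forall n, measurable (B n).
Hypothesis indepC : forall N M,
  P (\bigcap_(n in [set` index_iota N M]) ~` B n) = \prod_(N <= n < M) P (~` B n).
Hypothesis sumB : \sum_(n <oo) P (B n) = +oo.

Lemma measure_bigcap_setC_eq0 N : P (\bigcap_(n in [set n | (N <= n)%N]) ~` B n) = 0.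
Proof.
set G := \bigcap_(n in _) _.
have mG : measurable G by apply: bigcap_measurableType => n _; exact: measurableC.
pose p n := fine (P (B n)).
have PB n : P (B n) = (p n)%:E by rewrite fineK // fin_num_measure.
have p01 n : (0 <= p n <= 1)%R by rewrite -!lee_fin -PB measure_ge0 probability_le1.
have G_le M : P G <= (\prod_(N <= n < M) (1 - p n))%:E.
  rewrite -prodEFin (eq_bigr (fun n => P (~` B n))); last first.
    by move=> n _; rewrite probability_setC // PB EFinB.
  rewrite -indepC; apply: le_measure; rewrite ?inE //.
    by apply: fin_bigcap_measurable => // n _; exact: measurableC.
  by move=> w Gw n /=; rewrite mem_index_iota => /andP[Nn _]; exact: Gw.
have [g G_eq] : exists g, P G = g%:E by exists (fine (P G)); rewrite fineK // fin_num_measure.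
apply/eqP; rewrite eq_le measure_ge0 andbT G_eq lee_fin leNgt; apply/negP => g_gt0.
have p_oo : \sum_(n <oo) (p n)%:E = +oo by rewrite -sumB; apply: eq_eseriesr => n _; rewrite PB.
have [M S_ge] := @nneseries_tail_unbounded _ p (fun n => proj1 (andP (p01 n))) p_oo N g^-1%R.
have := G_le M; rewrite G_eq lee_fin => g_le.
have := @prod1B_mul_1D_sum_le1 _ _ (index_iota N M) p p01.
move: g_le S_ge; set Q := (\prod_(_ <- _) _)%R; set S := (\sum_(_ <- _) _)%R => g_le S_ge QS_le.
have gS : (1 <= g * S)%R by rewrite -(mulfV (lt0r_neq0 g_gt0)) ler_pM2l.
have S0 : (0 <= S)%R by apply: le_trans S_ge; rewrite invr_ge0 ltW.
have : (g * (1 + S) <= 1)%R by apply: le_trans QS_le; rewrite ler_wpM2r // addr_ge0.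
by rewrite mulrDr mulr1 => h; have := lt_le_trans (ltr_pwDl g_gt0 gS) h; rewrite ltxx.
Qed.

Lemma second_borel_cantelli :
  {ae P, forall w, forall N, exists2 n, (N <= n)%N & B n w}.
Proof.
apply: (@negligibleS _ _ _ P (\bigcup_N \bigcap_(n in [set n | (N <= n)%N]) ~` B n)).
  move=> w /= not_io; apply: contrapT => not_never; apply: not_io => N.
  by apply: contrapT => /forall2NP no_n; apply: not_never; exists N => // n Nn Bn; case: (no_n n).
apply: negligible_bigcup => N; exists (\bigcap_(n in [set n | (N <= n)%N]) ~` B n).
split => //; last exact: measure_bigcap_setC_eq0.
by apply: bigcap_measurableType => n _; exact: measurableC.
Qed.

End second_borel_cantelli.

Lemma limn_einf_le_frequently (R : realType) (u : (\bar R)^nat) (c : \bar R) :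
  (forall N, exists2 n, (N <= n)%N & (u n <= c)%E) -> (limn_einf u <= c)%E.
Proof.
move=> often; rewrite limn_einf_lim; apply: lime_le; first exact: is_cvg_einfs.
apply: nearW => N; have [n Nn un_le] := often N.
by apply: le_trans un_le; apply: ereal_inf_lbound; exists n.
Qed.

Lemma T_aux_le0 z w f (m : int) : m <= 0 -> T_aux z w f m = [:: m].
Proof. by case: f => [|f] /= ->. Qed.

(* Both jumps from [n.+1] land at or below [0], so [T_{n+1} = {n+1, n+1 - z, n+1 - w}]. *)
Lemma Lambda_le2 z w n : (n < z n.+1)%N -> (n < w n.+1)%N -> (Lambda z w n.+1 <= 2)%N.
Proof.
move=> zn wn; rewrite /Lambda /Tset /= !T_aux_le0 ?subr_le0 ?lez_nat //=.
by apply: leq_trans (size_undup _) _; case: ifP; case: ifP.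
Qed.

Theorem theorem2 (d : measure_display) (T : measurableType d) (R : realType)
  (P : probability T R) (Z W : T -> nat) (Zs Ws : nat -> T -> nat) :
  discrete_rvs (zw_family Z W Zs Ws) ->
  mutually_independent P (zw_family Z W Zs Ws) ->
  identically_distributed P (zw_family Z W Zs Ws) ->
  (forall i w, (1 <= zw_family Z W Zs Ws i w)%N) ->
  (\int[P]_w ((minn (Z w) (W w))%:R : R)%:E = +oo)%E ->
  {ae P, forall w, (limn_einf (fun n => ((Lambda (fun k => Zs k w) (fun k => Ws k w) n)%:R : R)%:E) < +oo)%E}.
Proof.
move=> mX indX idX _ Emin_oo; set X := zw_family Z W Zs Ws in mX indX idX.
have mXc := measurable_columns mX; have indXc := countable_independent_columns P indX.
(* [B 0] concerns [(Z, W)] itself; the threshold [n.-1] avoids any index shift. *)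
pose big n : set (nat * nat) := [set ab | (n.-1 < minn ab.1 ab.2)%N].
pose B n := [set w | big n (columns X n w)].
have mB n : measurable (B n) := measurable_preim mXc n (big n).
have indepC N M : P (\bigcap_(n in [set` index_iota N M]) ~` B n) =
                  (\prod_(N <= n < M) P (~` B n))%E.
  exact: (independent_preim P mXc indXc (index_iota N M) (fun n => ~` big n) (iota_uniq _ _)).
have sumB : (\sum_(n <oo) P (B n) = +oo)%E.
  have mtail n : measurable [set w | (n < minn (Z w) (W w))%N].
    exact: (measurable_preim mXc 0 [set ab | (n < minn ab.1 ab.2)%N]).
  apply/eqP; rewrite eq_le leey -Emin_oo integral_nat_tail //.
  apply: lee_nneseries => n _ //; rewrite (identically_distributed_columns P indX mX idX n 0).
  apply: le_measure; rewrite ?inE; [exact: mtail | exact: measurable_preim mXc 0 (big n) |].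
  by move=> w /=; apply: leq_ltn_trans (leq_pred n).
apply: filterS (second_borel_cantelli mB indepC sumB) => w often.
apply: le_lt_trans (ltry 2%R); apply: limn_einf_le_frequently => N.
have [[|n] Nn] := often N.+1; rewrite // /B /big /columns /= leq_min => /andP[zn wn].
by exists n.+1; rewrite ?lee_fin ?ler_nat ?Lambda_le2 // ltnW.
Qed.
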